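(* Let $k\ge0$, $p\in[0,1]$, and fix sequences $\xi^x,\xi^y$. (i) Let $i_0\le i_1$ and $j$ be integers such that $H^y_{(k,j)}=0$ and $\sum_{i=i_0}^{i_1}H^x_{(k,i)}\le1$, and let $I=\bigcup_{i=i_0}^{i_1}I_{(k,i)}$. Then for every $k$-fractal set $S\subseteq I^y_{(k,j)}$, $$\mathbb{P}^{\xi^x,\xi^y}_p\big[\mathcal{R}_k(S,I)\text{ contains no }k\text{-fractal set}\big]\le(i_1-i_0+1)\max\{u_k(p),v_k(p)\}.$$ (ii) If $i_1-i_0\ge1$, $\sum_{i=i_0}^{i_1}H^x_{(k,i)}\le1$, $I=\bigcup_{i=i_0}^{i_1}I_{(k,i)}$ and $S$ is any $k$-fractal set (not necessarily $k$-grouped), then $$\mathbb{P}^{\xi^x,\xi^y}_p\big[\mathcal{R}_k(S,I)\text{ contains no }k\text{-grouped }k\text{-fractal set}\big]\le(i_1-i_0+1)\max\{u_k(p),v_k(p)\}.$$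
   Context: $L=10^6$, $L_k=L^k$, $M_k=\{k\}\times\mathbb{Z}$, $I_{(k,i)}=[iL_k,(i+1)L_k)\cap\mathbb{Z}$; for $m=(k+1,i)$, $\mathcal{Q}_m=\{(k,iL+j):0\le j\le L-1\}$. For a sequence $\xi=(\xi_i)_{i\in\mathbb{Z}}$ of nonnegative integers define labels $H_m$: $H_{(0,i)}=\xi_i$; for $m\in M_{k+1}$, $H_m=0$ if all $m'\in\mathcal{Q}_m$ are good, $H_m=H_{m_1}-1$ if $m_1$ is the unique bad element of $\mathcal{Q}_m$, and $H_m=1+\sum_{i=1}^rH_{m_i}$ if $m_1,\dots,m_r$ ($r\ge2$) are the bad elements of $\mathcal{Q}_m$; $m$ is good iff $H_m=0$, bad otherwise. $H^x_m,H^y_m$ are these labels computed from $\xi^x$, $\xi^y$; $I^x_m,I^y_m$ denote $I_m$ viewed horizontally/vertically. $\mathbb{P}^{\xi^x,\xi^y}_p$: independent bond percolation on $\mathbb{Z}^2$, edge $\{(i,j),(i+1,j)\}$ open with probability $p^{\xi^x_i+1}$, edge $\{(i,j),(i,j+1)\}$ open with probability $p^{\xi^y_j+1}$. For $S\subseteq\mathbb{Z}$, $Z_k(S)=\{m\in M_k:I_m\cap S\neq\emptyset\}$; $Z\prec Z'$ means $(k,i)\in Z,(k,j)\in Z'\Rightarrow i<j$; $S_1,\dots,S_n$ is $k$-ordered if $Z_k(S_1)\prec\dots\prec Z_k(S_n)$. $S$ is $k$-good if all $m\in Z_k(S)$ have $H^y_m=0$. $\{i\}$ is $0$-fractal iff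 $\xi^y_i=0$; for $k\ge1$, $S$ is $k$-fractal if $S=S_1\cup\dots\cup S_{2^{10}}$ with $S$ $k$-good, $(S_1,\dots,S_{2^{10}})$ $(k-1)$-ordered and each $S_i$ $(k-1)$-fractal. A $k$-fractal $S$ is $k$-grouped if $S\subseteq I_m$ for some $m\in M_k$. For a rectangle $R=[a,b)\times[c,d)$ (vertices $[a,b]\times[c,d]\cap\mathbb{Z}^2$, edges $\{z,w\}$, $|z-w|=1$, $z\in[a,b]\times[c,d]$, $w\in[a,b)\times[c,d)$), $\mathcal{R}(S,R)$ is the set of $y$ with $(b,y)\in\{b\}\times[c,d]$ joined to $\{a\}\times S$ by an open path in $R$. For a finite interval $I=[a,b)$, $\mathcal{R}_k(S,I)=\bigcup_{m'\in Z_k(S)}\mathcal{R}(S\cap I^y_{m'},I\times I^y_{m'})$. $u_k(p)=\sup\mathbb{P}^{\xi^x,\xi^y}_p[\mathcal{R}_k(S,I^x_m)$ contains no $k$-grouped $k$-fractal set$]$ over $S,m\in M_k,\xi^x,\xi^y$ with $S$ $k$-fractal and $H^x_m=0$. $v_k(p)=\sup\mathbb{P}^{\xi^x,\xi^y}_p[\mathcal{R}_k(S,I^x_m)$ contains no $k$-fractal set$]$ over $h\ge1$, $S$, $m\in M_k$, $\xi^x,\xi^y$ with $H^x_m=h$ and $S$ the union of a $k$-ordered family of $2^{4(h-1)}$ $k$-fractal sets. *)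

From mathcomp Require Import all_boot all_order all_algebra.
From mathcomp Require Import boolp classical_sets reals.
Set Implicit Arguments. Unset Strict Implicit. Unset Printing Implicit Defensive.
Import Order.TTheory GRing.Theory Num.Theory.
Local Open Scope classical_set_scope.
Local Open Scope ring_scope.

Definition Lb : nat := (10 ^ 6)%N.
Definition Lk (k : nat) : int := ((Lb ^ k)%N)%:Z.

Definition Iblock (k : nat) (i : int) : set int :=
  [set x | i * Lk k <= x < (i + 1) * Lk k].

Fixpoint H (xi : int -> nat) (k : nat) (i : int) : nat :=
  match k with
  | 0 => xi i
  | k'.+1 =>
      let bads := [seq j <- iota 0 Lb | H xi k' (i * Lb%:Z + j%:Z) != 0%N] in
      match bads with
      | [::] => 0%N
      | [:: j] => (H xi k' (i * Lb%:Z + j%:Z)).-1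
      | _ => (1 + \sum_(j <- bads) H xi k' (i * Lb%:Z + j%:Z))%N
      end
  end.

(* Z_k(S) as a set of indices i (standing for m = (k,i)) *)
Definition Zk (k : nat) (S : set int) : set int :=
  [set i | exists2 s, S s & Iblock k i s].

Definition prec (Z Z' : set int) : Prop := forall i j, Z i -> Z' j -> i < j.

Definition kordered (k : nat) (F : nat -> set int) (n : nat) : Prop :=
  forall t, (t.+1 < n)%N -> prec (Zk k (F t)) (Zk k (F t.+1)).

Definition family_union (F : nat -> set int) (n : nat) : set int :=
  [set x | exists2 t, (t < n)%N & F t x].

Definition kgood (xiy : int -> nat) (k : nat) (S : set int) : Prop :=
  forall i, Zk k S i -> H xiy k i = 0%N.

Fixpoint fractal (xiy : int -> nat) (k : nat) (S : set int) : Prop :=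
  match k with
  | 0 => exists i, S = [set i]%classic /\ xiy i = 0%N
  | k'.+1 => kgood xiy k S /\
      exists F : nat -> set int,
        S = family_union F (2 ^ 10) /\ kordered k' F (2 ^ 10) /\
        (forall t, (t < 2 ^ 10)%N -> fractal xiy k' (F t))
  end.

Definition grouped (k : nat) (S : set int) : Prop :=
  exists i, S `<=` Iblock k i.

(* edge (false, i, j) = {(i,j),(i+1,j)} (horizontal);
   edge (true, i, j)  = {(i,j),(i,j+1)} (vertical). *)
Definition edge := (bool * int * int)%type.
Definition config := edge -> bool.

Definition open_step (om : config) (z w : int * int) : bool :=
  [|| (w == (z.1 + 1, z.2)) && om (false, z.1, z.2),
      (z == (w.1 + 1, w.2)) && om (false, w.1, w.2),
      (w == (z.1, z.2 + 1)) && om (true, z.1, z.2)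
    | (z == (w.1, w.2 + 1)) && om (true, w.1, w.2)].

(* rectangle R = [a,b) x [c,d): closed vertex box and half-open box *)
Definition in_closed (a b c d : int) (z : int * int) : bool :=
  (a <= z.1 <= b) && (c <= z.2 <= d).
Definition in_half (a b c d : int) (z : int * int) : bool :=
  (a <= z.1 < b) && (c <= z.2 < d).
Definition edge_in_rect (a b c d : int) (z w : int * int) : bool :=
  (in_closed a b c d z && in_half a b c d w) ||
  (in_closed a b c d w && in_half a b c d z).

Definition Reach (om : config) (S : set int) (a b c d : int) : set int :=
  [set y | c <= y <= d /\
     exists (v0 : int * int) (s : seq (int * int)),
       [/\ v0.1 = a, S v0.2, last v0 s = (b, y) &
           path (fun z w => open_step om z w && edge_in_rect a b c d z w) v0 s]].

Definition Rk (om : config) (k : nat) (S : set int) (a b : int) : set int :=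
  [set y | exists2 j, Zk k S j &
     Reach om (S `&` Iblock k j) a b (j * Lk k) ((j + 1) * Lk k) y].

Section Prob.
Variable R : realType.

Definition q_open (p : R) (xix xiy : int -> nat) (e : edge) : R :=
  if e.1.1 then p ^+ (xiy e.2).+1 else p ^+ (xix e.1.2).+1.

Definition depends_only (A : config -> Prop) (E : seq edge) : Prop :=
  forall om om', (forall e, e \in E -> om e = om' e) -> (A om <-> A om').

Definition cyl_prob (p : R) (xix xiy : int -> nat) (E : seq edge)
    (A : config -> Prop) : R :=
  \sum_(b : (size E).-tuple bool)
     (\prod_(t < size E)
        (if tnth b t then q_open p xix xiy (nth (false, 0, 0) E t)
         else 1 - q_open p xix xiy (nth (false, 0, 0) E t))) *
     (if `[< A (fun e => nth false b (index e E)) >] then 1 else 0).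

(* P_p^{xix,xiy}[A] for an event A depending on finitely many edges
   (all finite-dimensional marginals agree, so the sup is that common value). *)
Definition percP (p : R) (xix xiy : int -> nat) (A : config -> Prop) : R :=
  sup [set v | exists E : seq edge,
         [/\ uniq E, depends_only A E & v = cyl_prob p xix xiy E A]].

Definition no_fractal (xiy : int -> nat) (k : nat) (S : set int) (a b : int)
    (om : config) : Prop :=
  ~ exists T, fractal xiy k T /\ T `<=` Rk om k S a b.
Definition no_grouped_fractal (xiy : int -> nat) (k : nat) (S : set int)
    (a b : int) (om : config) : Prop :=
  ~ exists T, [/\ fractal xiy k T, grouped k T & T `<=` Rk om k S a b].

Definition u_k (k : nat) (p : R) : R :=
  sup [set v | exists (S : set int) (m : int) (xix xiy : int -> nat),
        [/\ fractal xiy k S, H xix k m = 0%N &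
            v = percP p xix xiy
                  (no_grouped_fractal xiy k S (m * Lk k) ((m + 1) * Lk k))]].

Definition v_k (k : nat) (p : R) : R :=
  sup [set v | exists (h : nat) (S : set int) (m : int) (xix xiy : int -> nat)
                      (F : nat -> set int),
        [/\ (1 <= h)%N, H xix k m = h,
            S = family_union F (2 ^ (4 * (h - 1))),
            kordered k F (2 ^ (4 * (h - 1))) /\
            (forall t, (t < 2 ^ (4 * (h - 1)))%N -> fractal xiy k (F t)) &
            v = percP p xix xiy
                  (no_fractal xiy k S (m * Lk k) ((m + 1) * Lk k))]].

End Prob.

(* Cut the strip of blocks [I_(k,i0)], ..., [I_(k,i1)] after its first block
   and condition on the edges of that block.  Either the crossing of this block
   fails, which has probability at most [u_k] if the block is good and at most
   [v_k] if its label is 1, or it reaches a fractal set [T]; then the crossing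
   of the whole strip can only fail if the crossing of the remaining blocks
   from [T] fails, an event on disjoint edges, and induction on the number of
   blocks applies.  The labels sum to at most 1, so at most one block is bad.
   In (ii) a good first block is crossed towards a grouped set, from which
   everything reachable is grouped, while a bad first block is followed only by
   good blocks, each crossed towards grouped sets; a lone bad block is not
   controlled, whence [i0 < i1]. *)

From mathcomp Require Import all_boot all_order all_algebra.
From mathcomp Require Import boolp classical_sets reals.
From mathcomp Require Import zify ring lra.
Set Implicit Arguments. Unset Strict Implicit. Unset Printing Implicit Defensive.
Import Order.TTheory GRing.Theory Num.Theory.
Local Open Scope classical_set_scope.
Local Open Scope ring_scope.

Section ProductExpectation.
Context {R : realDomainType} {T : eqType} (q : T -> R).

Definition assign (om : T -> bool) (e : T) (x : bool) : T -> bool :=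
  fun e' => if e' == e then x else om e'.

(* Expectation of [f] under the product measure on the coordinates in [E]
   ([e] is [true] with probability [q e]); the other coordinates stay as in [om]. *)
Fixpoint expect (E : seq T) (f : (T -> bool) -> R) (om : T -> bool) : R :=
  if E is e :: E' then
    q e * expect E' f (assign om e true) + (1 - q e) * expect E' f (assign om e false)
  else f om.

Definition depends_on (f : (T -> bool) -> R) (D : seq T) : Prop :=
  forall om om', {in D, om =1 om'} -> f om = f om'.

Lemma assign_id om e x y : assign (assign om e x) e y = assign om e y.
Proof. by apply: funext => e'; rewrite /assign; case: eqP. Qed.

Lemma assignC om e e' x y : e != e' ->
  assign (assign om e x) e' y = assign (assign om e' y) e x.
Proof.
move=> ne; apply: funext => z; rewrite /assign.
by case: (eqVneq z e') => [->|//]; rewrite eq_sym (negbTE ne).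
Qed.

Lemma expect_cat E1 E2 f om :
  expect (E1 ++ E2) f om = expect E1 (expect E2 f) om.
Proof. by elim: E1 om => [|e E IH] om //=; rewrite !IH. Qed.

Lemma expectDr E f c om : expect E (fun o => f o + c) om = expect E f om + c.
Proof. by elim: E om => [|e E IH] om //=; rewrite !IH; ring. Qed.

Lemma expect_assign_free E f e x om :
  (forall om' y, f (assign om' e y) = f om') ->
  expect E f (assign om e x) = expect E f om.
Proof.
move=> free_e; elim: E om => [|e' E IH] om /=; first exact: free_e.
have [<-|ne] := eqVneq e e'; first by rewrite !assign_id.
by rewrite !(assignC _ _ _ ne) !IH.
Qed.

Lemma expect_filter E D f om : depends_on f D ->
  expect E f om = expect [seq e <- E | e \in D] f om.
Proof.
move=> fD; elim: E om => [|e E IH] om //=.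
case: ifP => eD /=; first by rewrite !IH.
have free_e om' y : f (assign om' e y) = f om'.
  by apply: fD => e' e'D; rewrite /assign; case: eqP => // e'e; rewrite -e'e e'D in eD.
rewrite !expect_assign_free // IH; ring.
Qed.

Lemma expect_rem E e f om : uniq E -> e \in E ->
  expect E f om = expect (e :: rem e E) f om.
Proof.
elim: E om => [|e' E IH] om //= /andP[e'E uE].
rewrite in_cons; have [<-|ne] //= := eqVneq e e'.
by move=> eE; rewrite !IH //= !(assignC _ _ _ ne); ring.
Qed.

Lemma expect_perm E E' f om : uniq E -> perm_eq E E' ->
  expect E f om = expect E' f om.
Proof.
elim: E E' om => [|e E IH] E' om; first by move=> _; rewrite perm_sym => /perm_nilP ->.
move=> uE pE.
have uE' : uniq E' by rewrite -(perm_uniq pE).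
have eE' : e \in E' by rewrite -(perm_mem pE) mem_head.
have pE1 : perm_eq E (rem e E').
  by rewrite -(perm_cons e); apply: perm_trans pE (perm_to_rem eE').
case/andP: uE => _ uE.
by rewrite (expect_rem _ _ uE' eE') /= !(IH (rem e E')).
Qed.

Lemma expect_depends E E' f om : uniq E -> uniq E' ->
  depends_on f E -> depends_on f E' -> expect E f om = expect E' f om.
Proof.
move=> uE uE' fE fE'.
rewrite (expect_filter E _ fE') (expect_filter E' _ fE).
apply: expect_perm; first exact: filter_uniq.
apply: uniq_perm; try exact: filter_uniq.
by move=> e; rewrite !mem_filter andbC.
Qed.

Lemma eq_expect_outside E D f om om' : depends_on f D ->
  (forall e, e \in D -> e \notin E -> om e = om' e) ->
  expect E f om = expect E f om'.
Proof.
move=> fD; elim: E om om' => [|e E IH] om om' eq_om /=.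
  by apply: fD => e eD; apply: eq_om.
congr (_ * _ + _ * _); apply: IH => e' e'D e'E; rewrite /assign;
  by case: eqP => // /eqP ne; apply: eq_om; rewrite // in_cons negb_or ne.
Qed.

Lemma sum_tuple_cons n (F : n.+1.-tuple bool -> R) :
  \sum_(b : n.+1.-tuple bool) F b =
  \sum_(x : bool) \sum_(b : n.-tuple bool) F [tuple of x :: b].
Proof.
rewrite pair_big /=.
rewrite (reindex (fun xb : bool * n.-tuple bool => [tuple of xb.1 :: xb.2])) //=.
exists (fun b : n.+1.-tuple bool => (thead b, [tuple of behead b])).
  by move=> [x b] _ /=; congr pair; apply: val_inj.
by move=> b _; apply: val_inj => /=; case: b => [[|x s] //=].
Qed.

Definition tuple_config (E : seq T) (b : seq bool) (om : T -> bool) : T -> bool :=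
  fun e => if e \in E then nth false b (index e E) else om e.

Lemma expect_tuple_sum x0 E g om : uniq E ->
  \sum_(b : (size E).-tuple bool)
     (\prod_(t < size E)
        (if tnth b t then q (nth x0 E t) else 1 - q (nth x0 E t))) *
     g (tuple_config E b om)
  = expect E g om.
Proof.
elim: E om => [|e E IH] om /=.
  rewrite (eq_bigl (pred1 [tuple])); last by move=> t; apply/esym/eqP; exact: tuple0.
  by rewrite big_pred1_eq big_ord0 mul1r.
move=> /andP[eE uE].
rewrite sum_tuple_cons big_bool /= -!IH // !mulr_sumr.
congr (_ + _); apply: eq_bigr => b _; rewrite big_ord_recl /= mulrA; congr (_ * _ * _).
all: try (apply: eq_bigr => t _; rewrite !(tnth_nth false) //=).
all: congr g; apply: funext => e'; rewrite /tuple_config /assign in_cons.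
all: by case: (eqVneq e' e) => [->|ne] /=; rewrite ?(negbTE eE) ?eqxx // eq_sym (negbTE ne).
Qed.

Hypothesis q_in01 : forall e, 0 <= q e <= 1.

Lemma ler_expect E f g om :
  (forall o, (forall e, e \notin E -> o e = om e) -> f o <= g o) ->
  expect E f om <= expect E g om.
Proof.
elim: E om => [|e E IH] om le_fg /=; first exact: le_fg.
have [q0 q1] := andP (q_in01 e).
have le_assign x : expect E f (assign om e x) <= expect E g (assign om e x).
  apply: IH => o o_out; apply: le_fg => e'; rewrite in_cons negb_or => /andP[ne e'E].
  by rewrite o_out // /assign (negbTE ne).
by rewrite lerD // ler_wpM2l // subr_ge0.
Qed.

Lemma expect_in01 E f om : (forall o, 0 <= f o <= 1) -> 0 <= expect E f om <= 1.
Proof.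
move=> f01; elim: E om => [|e E IH] om //=.
have [q0 q1] := andP (q_in01 e).
have [a0 a1] := andP (IH (assign om e true)).
have [b0 b1] := andP (IH (assign om e false)).
apply/andP; split; first by rewrite addr_ge0 // mulr_ge0 // subr_ge0.
nra.
Qed.

End ProductExpectation.

Lemma sup_in01 (R : realType) (S : set R) :
  (forall x, S x -> 0 <= x <= 1) -> 0 <= sup S <= 1.
Proof.
move=> S01; have [[x Sx]|S0] := pselect (S !=set0); last first.
  rewrite (_ : S = set0) ?sup0 ?lexx ?ler01 //.
  by apply/seteqP; split => // y Sy; case: S0; exists y.
have [x0 _] := andP (S01 x Sx).
apply/andP; split.
  by apply: le_trans x0 (ub_le_sup _ Sx); exists 1 => y /S01 /andP[].
by apply: ge_sup; [exists x | move=> y /S01 /andP[]].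
Qed.

Definition indicator {R : realType} (A : config -> Prop) (om : config) : R :=
  if `[< A om >] then 1 else 0.

Lemma indicator_in01 (R : realType) A om : 0 <= @indicator R A om <= 1.
Proof. by rewrite /indicator; case: ifP; rewrite ?lexx ?ler01. Qed.

Lemma depends_on_indicator (R : realType) A E :
  depends_only A E -> depends_on (@indicator R A) E.
Proof.
by move=> AE om om' eq_om; rewrite /indicator (propext (AE om om' eq_om)).
Qed.

Section PercolationProbability.
Variables (R : realType) (p : R) (xix xiy : int -> nat).
Local Notation P := (percP p xix xiy).
Local Notation q := (q_open p xix xiy).

Lemma cyl_probE E A : uniq E ->
  cyl_prob p xix xiy E A = expect q E (indicator A) (fun _ => false).
Proof.
move=> uE; rewrite /cyl_prob -(expect_tuple_sum _ (false, 0, 0) _ _ uE).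
apply: eq_bigr => b _; congr (_ * _); rewrite /indicator /tuple_config.
congr (if `[< A _ >] then _ else _); apply: funext => e.
by case: ifP => // eE; rewrite nth_default // memNindex ?eE // size_tuple.
Qed.

Lemma percPE E A : uniq E -> depends_only A E ->
  P A = expect q E (indicator A) (fun _ => false).
Proof.
move=> uE AE; rewrite /percP.
rewrite (_ : [set v | _] = [set expect q E (indicator A) (fun _ => false)]) ?sup1 //.
apply/seteqP; split => v /=; last by move=> ->; exists E; rewrite cyl_probE.
move=> [E' [uE' AE' ->]]; rewrite cyl_probE //.
by apply: expect_depends => //; apply: depends_on_indicator.
Qed.

Hypothesis p01 : 0 <= p <= 1.

Lemma q_open_in01 e : 0 <= q e <= 1.
Proof.
have [p0 p1] := andP p01.
by rewrite /q_open; case: ifP => _; rewrite exprn_ge0 ?exprn_ile1.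
Qed.

Lemma percP_in01 A : 0 <= P A <= 1.
Proof.
apply: sup_in01 => v [E [uE _ ->]]; rewrite cyl_probE //.
exact: (expect_in01 q_open_in01 _ _ (@indicator_in01 _ A)).
Qed.

Lemma le_percP E (A A' : config -> Prop) : uniq E ->
  depends_only A E -> depends_only A' E -> (forall w, A w -> A' w) -> P A <= P A'.
Proof.
move=> uE AE A'E AA'; rewrite (percPE uE AE) (percPE uE A'E).
apply: (ler_expect q_open_in01) => o _; rewrite /indicator.
case: asboolP => [Ao|_]; first by rewrite asboolT ?lexx //; exact: AA'.
by case/andP: (@indicator_in01 R A' o).
Qed.

Lemma percP_le_split E1 E2 (A B : config -> Prop) c :
  uniq (E1 ++ E2) -> depends_only A (E1 ++ E2) -> depends_only B E1 -> 0 <= c ->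
  (forall w1, ~ B w1 -> exists A' : config -> Prop,
     [/\ depends_only A' E2, P A' <= c &
         forall w, {in E1, w =1 w1} -> A w -> A' w]) ->
  P A <= P B + c.
Proof.
move=> uE12 AE BE1 c0 cond; have := uE12.
rewrite cat_uniq => /and3P[uE1 /hasPn disj uE2].
rewrite (percPE uE12 AE) (percPE uE1 BE1) expect_cat -expectDr.
apply: (ler_expect q_open_in01) => w1 _.
have [Bw1|nBw1] := pselect (B w1).
  case/andP: (expect_in01 q_open_in01 E2 w1 (@indicator_in01 _ A)) => _ le1.
  by rewrite /indicator asboolT // (le_trans le1) // lerDl.
have [A' [A'E2 PA' AA']] := cond w1 nBw1.
rewrite /indicator (asboolF nBw1) add0r (le_trans _ PA') // (percPE uE2 A'E2).
rewrite -(eq_expect_outside _ (om := w1) (depends_on_indicator R A'E2)); last by move=> e ->.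
apply: (ler_expect q_open_in01) => o o_out; rewrite /indicator.
case: asboolP => [Ao|_]; last by case/andP: (@indicator_in01 R A' o).
rewrite asboolT ?lexx //; apply: AA' Ao => e eE1; apply: o_out.
by apply/negP => /disj; rewrite eE1.
Qed.

End PercolationProbability.

Definition irange (a b : int) : seq int :=
  if a <= b then [seq a + i%:Z | i <- iota 0 `|b - a|] else [::].

Lemma mem_irange a b y : (y \in irange a b) = (a <= y < b).
Proof.
rewrite /irange; case: ifP => ab; last first.
  by rewrite in_nil; apply/esym/negP => /andP[ay yb]; lia.
apply/mapP/idP => [[i]|/andP[ay yb]]; first by rewrite mem_iota add0n => ? ->; lia.
by exists `|y - a|%N; [rewrite mem_iota add0n; lia | lia].
Qed.

Lemma irange_uniq a b : uniq (irange a b).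
Proof.
rewrite /irange; case: ifP => // _; rewrite map_inj_uniq ?iota_uniq //.
by move=> i j /addrI [].
Qed.

Definition box_edges (a b C D : int) : seq edge :=
  [seq (false, x, y) | x <- irange a b, y <- irange C (D + 1)] ++
  [seq (true, x, y) | x <- irange a b, y <- irange C D].

Lemma mem_box_edges a b C D (d : bool) x y :
  ((d, x, y) \in box_edges a b C D) =
  [&& a <= x < b, C <= y & (if d then y < D else y <= D)].
Proof.
rewrite mem_cat; apply/orP/idP => [|].
  by case=> /allpairsP [[x' y'] /= [+ + [-> -> ->]]];
    rewrite !mem_irange => /andP[? ?] /andP[? ?] /=; lia.
case/and3P=> /andP[ax xb] Cy; case: d => yD; [right | left]; apply/allpairsP;
  by exists (x, y); rewrite /= !mem_irange ax xb Cy; split => //; lia.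
Qed.

Lemma box_edges_uniq a b C D : uniq (box_edges a b C D).
Proof.
rewrite cat_uniq !allpairs_uniq ?irange_uniq //=; last 2 first.
- by move=> [x y] [x' y'] _ _ /= [-> ->].
- by move=> [x y] [x' y'] _ _ /= [-> ->].
rewrite andbT; apply/hasPn => -[[d x] y] /allpairsP [[? ?] /= [_ _ [-> _ _]]].
by apply/negP => /allpairsP [[? ?] /= [_ _ []]].
Qed.

Lemma box_edges_cat_uniq a m b C D : uniq (box_edges a m C D ++ box_edges m b C D).
Proof.
rewrite cat_uniq !box_edges_uniq andbT /=; apply/hasPn => -[[d x] y].
rewrite !mem_box_edges => /and3P[/andP[mx xb] _ _].
by apply/negP => /and3P[/andP[ax xm] _ _]; lia.
Qed.

Lemma box_edges_split a m b C D e : a <= m <= b ->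
  e \in box_edges a b C D -> e \in box_edges a m C D ++ box_edges m b C D.
Proof.
move=> /andP[am mb]; case: e => [[d x] y]; rewrite mem_box_edges.
case/and3P => /andP[ax xb] Cy yD; rewrite mem_cat !mem_box_edges Cy yD !andbT.
by case: (ltrP x m) => xm; apply/orP; [left | right]; apply/andP; split; lia.
Qed.

Lemma depends_only_sub (A : config -> Prop) E E' : depends_only A E ->
  {subset E <= E'} -> depends_only A E'.
Proof. by move=> AE sub om om' eq_om; apply: AE => e /sub /eq_om. Qed.

Lemma open_step_in_rect_eq om om' a b c d C D : C <= c -> d <= D ->
  {in box_edges a b C D, om =1 om'} ->
  forall z w, open_step om z w && edge_in_rect a b c d z w =
              open_step om' z w && edge_in_rect a b c d z w.
Proof.
move=> Cc dD eq_om [z1 z2] [w1 w2].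
case zw_in: edge_in_rect; rewrite ?andbF ?andbT //.
move: zw_in; rewrite /edge_in_rect /in_closed /in_half /= => zw_in.
have [[/andP[? ?] /andP[? ?] /andP[? ?] /andP[? ?]] lower] :
    [/\ a <= z1 <= b, c <= z2 <= d, a <= w1 <= b & c <= w2 <= d] /\
    ((z1 < b /\ z2 < d) \/ (w1 < b /\ w2 < d)).
  by case/orP: zw_in => /andP[/andP[/andP[? ?] /andP[? ?]] /andP[/andP[? ?] /andP[? ?]]];
    (split; [split; apply/andP; split; lia | lia]).
rewrite /open_step /=; congr (_ || (_ || (_ || _))); case: eqP => // -[? ?].
all: by rewrite eq_om // mem_box_edges; apply/and3P; split; try apply/andP; lia.
Qed.

Lemma Reach_eq_box om om' S a b c d C D : C <= c -> d <= D ->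
  {in box_edges a b C D, om =1 om'} ->
  Reach om S a b c d = Reach om' S a b c d.
Proof.
move=> Cc dD eq_om; have eq_step := open_step_in_rect_eq Cc dD eq_om.
apply/seteqP; split => y [cyd [v0 [s [? ? ? path_s]]]]; split => //; exists v0, s.
  by split; rewrite // -(eq_path eq_step).
by split; rewrite // (eq_path eq_step).
Qed.

Definition blocks_within (k : nat) (S : set int) (C D : int) : Prop :=
  forall j, Zk k S j -> C <= j * Lk k /\ (j + 1) * Lk k <= D.

Lemma Rk_eq_box om om' k S a b C D : blocks_within k S C D ->
  {in box_edges a b C D, om =1 om'} -> Rk om k S a b = Rk om' k S a b.
Proof.
move=> SCD eq_om; apply/seteqP; split => y [j Sj reach];
  exists j => //; have [Cj jD] := SCD j Sj.
  by rewrite -(Reach_eq_box _ Cj jD eq_om).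
by rewrite (Reach_eq_box _ Cj jD eq_om).
Qed.

Lemma Lk_gt0 k : 0 < Lk k.
Proof. by rewrite ltz_nat expn_gt0. Qed.

Lemma Iblock_inj k j j' t : Iblock k j t -> Iblock k j' t -> j = j'.
Proof.
rewrite /Iblock /= => /andP[jt tj] /andP[j't tj'].
have L0 := Lk_gt0 k.
case: (ltgtP j j') => // jj'.
  have : (j + 1) * Lk k <= j' * Lk k by rewrite ler_pM2r //; lia.
  lia.
have : (j' + 1) * Lk k <= j * Lk k by rewrite ler_pM2r //; lia.
lia.
Qed.

(* The corner [(b, d)] has no edge in the rectangle. *)
Lemma Reach_lt om S a b c d y : (forall s, S s -> s < d) ->
  Reach om S a b c d y -> y < d.
Proof.
move=> Sd [/andP[cy yd] [v0 [s [_ Sv0 last_s path_s]]]].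
case/lastP: s last_s path_s => [/= v0E _|s w]; first by move: Sv0; rewrite v0E => /Sd.
rewrite last_rcons rcons_path => -> /andP[_].
case: (last v0 s) => z1 z2.
rewrite lt_neqAle yd andbT; apply: contraTneq => ->.
rewrite /open_step /edge_in_rect /in_closed /in_half /= ltxx !andbF /=.
apply/negP => /andP[step /andP[/andP[/andP[? ?] /andP[? ?]] /andP[/andP[? ?] /andP[? ?]]]].
by case/or4P: step => /andP[/eqP [] ? ? _]; lia.
Qed.

Lemma Reach_Iblock om k S j a b y :
  Reach om (S `&` Iblock k j) a b (j * Lk k) ((j + 1) * Lk k) y -> Iblock k j y.
Proof.
move=> reach; have y_lt : y < (j + 1) * Lk k by apply: Reach_lt reach => s [_ /andP[]].
by case: reach => /andP[jy _] _; rewrite /Iblock /= jy y_lt.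
Qed.

Lemma Rk_Iblock om k S a b y : Rk om k S a b y -> exists2 j, Zk k S j & Iblock k j y.
Proof. by move=> [j Sj reach]; exists j => //; apply: Reach_Iblock reach. Qed.

Lemma Zk_Rk_sub om k S T a b : T `<=` Rk om k S a b -> Zk k T `<=` Zk k S.
Proof.
move=> TS j [t Tt jt]; have [j' Sj' j't] := Rk_Iblock (TS _ Tt).
by rewrite (Iblock_inj jt j't).
Qed.

Lemma blocks_within_Rk om k S T a b C D :
  T `<=` Rk om k S a b -> blocks_within k S C D -> blocks_within k T C D.
Proof. by move=> TS SCD j /(Zk_Rk_sub TS) /SCD. Qed.

Lemma edge_in_rect_widen a b a' b' c d z w : a' <= a -> b <= b' ->
  edge_in_rect a b c d z w -> edge_in_rect a' b' c d z w.
Proof.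
move=> a'a bb'; rewrite /edge_in_rect /in_closed /in_half.
case/orP => /andP[/andP[/andP[? ?] /andP[? ?]] /andP[/andP[? ?] /andP[? ?]]];
  apply/orP; [left|right]; repeat (apply/andP; split); lia.
Qed.

Lemma Reach_cat om S S' a m b c d y : a <= m -> m <= b ->
  (forall s, S' s -> Reach om S a m c d s) ->
  Reach om S' m b c d y -> Reach om S a b c d y.
Proof.
move=> am mb S'S [cyd [v0 [s [v0m S'v0 last_s path_s]]]].
have [_ [u0 [s1 [u0a Su0 last_s1 path_s1]]]] := S'S _ S'v0.
have v0E : last u0 s1 = v0 by rewrite last_s1 -v0m -surjective_pairing.
split => //; exists u0, (s1 ++ s); split => //; first by rewrite last_cat v0E.
rewrite cat_path v0E; apply/andP; split; [move: path_s1 | move: path_s].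
all: by apply: sub_path => z w /andP[-> /=]; apply: edge_in_rect_widen; lia.
Qed.

Lemma Rk_cat om k S T a m b : a <= m -> m <= b ->
  T `<=` Rk om k S a m -> Rk om k T m b `<=` Rk om k S a b.
Proof.
move=> am mb TS y [j Tj reach]; exists j; first exact: (Zk_Rk_sub TS).
apply: Reach_cat am mb _ reach => s [Ts js].
have [j' _ reach'] := TS _ Ts.
by rewrite (Iblock_inj js (Reach_Iblock reach')).
Qed.

Lemma Rk_grouped om k S a b j : S `<=` Iblock k j -> Rk om k S a b `<=` Iblock k j.
Proof.
move=> Sj y /Rk_Iblock [j' [s Ss j's] j'y].
by rewrite -(Iblock_inj j's (Sj _ Ss)).
Qed.

Lemma family_union_bounded (F : nat -> set int) n :
  (forall t, (t < n)%N -> exists r : int, forall s, F t s -> `|s| <= r) ->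
  exists r : int, forall s, family_union F n s -> `|s| <= r.
Proof.
elim: n => [|n IH] Fr; first by exists 0 => s [].
have [r1 r1F] := IH (fun t tn => Fr t (ltnW tn)).
have [r2 r2F] := Fr n (ltnSn n).
exists (Num.max r1 r2) => s [t]; rewrite ltnS leq_eqVlt => /orP[/eqP -> /r2F|tn Fts].
  by rewrite le_max => ->; rewrite orbT.
by rewrite le_max r1F //; exists t.
Qed.

Lemma fractal_bounded xiy k S : fractal xiy k S ->
  exists r : int, forall s, S s -> `|s| <= r.
Proof.
elim: k S => [|k IH] S /=; first by move=> [i [-> _]]; exists `|i| => s ->.
by move=> [_ [F [-> [_ Ffrac]]]]; apply: family_union_bounded => t /Ffrac /IH.
Qed.

Lemma fractal_blocks_within xiy k S : fractal xiy k S ->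
  exists C D, blocks_within k S C D.
Proof.
move=> /fractal_bounded [r Sr]; exists (- r - Lk k), (r + Lk k).
move=> j [s /Sr sr /andP[js sj]]; rewrite mulrDl mul1r in sj *.
have L0 := Lk_gt0 k; split; lia.
Qed.

Section BlockInduction.
Variables (R : realType) (p : R) (xix xiy : int -> nat) (k : nat).
Hypothesis p01 : 0 <= p <= 1.
Local Notation P := (percP p xix xiy).
Local Notation L := (Lk k).

Definition no_crossing (only_grouped : bool) (S : set int) (i j : int)
    (w : config) : Prop :=
  ~ exists T, [/\ fractal xiy k T, only_grouped -> grouped k T &
                  T `<=` Rk w k S (i * L) (j * L)].

Lemma no_crossingT S i j :
  no_crossing true S i j = no_grouped_fractal xiy k S (i * L) (j * L).
Proof.
apply/funext => w; apply/propext.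
split=> nc [T [fT gT TS]]; apply: nc; exists T; split => //.
by apply: gT.
Qed.

Lemma no_crossingF S i j : no_crossing false S i j = no_fractal xiy k S (i * L) (j * L).
Proof.
apply/funext => w; apply/propext.
by split=> nc => [[T [fT TS]] | [T [fT _ TS]]]; apply: nc; exists T.
Qed.

Lemma no_crossing_depends g S i j C D : blocks_within k S C D ->
  depends_only (no_crossing g S i j) (box_edges (i * L) (j * L) C D).
Proof. by move=> SCD om om' eq_om; rewrite /no_crossing (Rk_eq_box SCD eq_om). Qed.

Lemma no_crossing_sub g g' S i j w : g ==> g' ->
  no_crossing g S i j w -> no_crossing g' S i j w.
Proof.
by move=> gg' nc [T [fT gT TS]]; apply: nc; exists T; split => // /(implyP gg') /gT.
Qed.

Lemma no_crossing_cat g gB g' S T i m j w : i <= m <= j -> g ==> g' || gB ->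
  (gB -> grouped k T) -> T `<=` Rk w k S (i * L) (m * L) ->
  no_crossing g S i j w -> no_crossing g' T m j w.
Proof.
move=> /andP[im mj] gg' gT TS nc [T' [fT' gT' T'T]]; apply: nc; exists T'; split => //.
  move=> /(implyP gg') /orP[/gT' //|/gT [j0 Tj0]].
  by exists j0 => y /T'T; apply: Rk_grouped.
by move=> y /T'T; apply: (Rk_cat _ _ TS); rewrite ler_pM2r ?Lk_gt0.
Qed.

Lemma u_k_ge0 : 0 <= u_k k p.
Proof.
apply: (andP (sup_in01 _)).1 => v [S [m [xix' [xiy' [_ _ ->]]]]].
exact: (percP_in01 _ _ p01).
Qed.

Lemma percP_block_good g S i : fractal xiy k S -> H xix k i = 0%N ->
  P (no_crossing g S i (i + 1)) <= u_k k p.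
Proof.
move=> fS Hi; have [C [D SCD]] := fractal_blocks_within fS.
apply: (@le_trans _ _ (P (no_crossing true S i (i + 1)))).
  apply: (le_percP _ _ p01 (box_edges_uniq _ _ C D)); try exact: no_crossing_depends.
  by move=> w; apply: no_crossing_sub; rewrite implybT.
rewrite no_crossingT; apply: ub_le_sup; last by exists S, i, xix, xiy.
exists 1 => v [S' [m [xix' [xiy' [_ _ ->]]]]].
by case/andP: (percP_in01 xix' xiy' p01 (no_grouped_fractal xiy' k S' (m * L) ((m + 1) * L))).
Qed.

(* A single set is a [k]-ordered family of [2 ^ (4 * (1 - 1)) = 1] fractal sets. *)
Lemma percP_block_bad S i : fractal xiy k S -> H xix k i = 1%N ->
  P (no_crossing false S i (i + 1)) <= v_k k p.
Proof.
move=> fS Hi; rewrite no_crossingF; apply: ub_le_sup.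
  exists 1 => v [h [S' [m [xix' [xiy' [F [_ _ _ _ ->]]]]]]].
  by case/andP: (percP_in01 xix' xiy' p01 (no_fractal xiy' k S' (m * L) ((m + 1) * L))).
exists 1%N, S, i, xix, xiy, (fun _ => S); split => //.
by apply/seteqP; split => [s Ss|s [_ _ //]]; exists 0%N.
Qed.

Lemma percP_peel g gB g' S i j c : i + 1 <= j -> g ==> g' || gB ->
  fractal xiy k S -> 0 <= c ->
  (forall T, fractal xiy k T -> (gB -> grouped k T) ->
     P (no_crossing g' T (i + 1) j) <= c) ->
  P (no_crossing g S i j) <= P (no_crossing gB S i (i + 1)) + c.
Proof.
move=> ij gg' fS c0 Pc; have [C [D SCD]] := fractal_blocks_within fS.
have iL : i * L <= (i + 1) * L <= j * L by rewrite !ler_pM2r ?Lk_gt0 //; lia.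
apply: (percP_le_split p01 (E1 := box_edges (i * L) ((i + 1) * L) C D)
                          (E2 := box_edges ((i + 1) * L) (j * L) C D)) => //.
- exact: box_edges_cat_uniq.
- apply: (@depends_only_sub _ (box_edges (i * L) (j * L) C D)).
    exact: no_crossing_depends.
  by move=> e; apply: box_edges_split.
- exact: no_crossing_depends.
move=> w1 /contrapT [T [fT gT TS]].
exists (no_crossing g' T (i + 1) j); split.
- exact: no_crossing_depends (blocks_within_Rk TS SCD).
- exact: Pc.
- move=> w eq_w; apply: no_crossing_cat gT _ => //; first by apply/andP; split; lia.
  by rewrite (Rk_eq_box SCD eq_w).
Qed.

Lemma sum_H_recl n i : (\sum_(t < n.+1) H xix k (i + t%:Z) =
  H xix k i + \sum_(t < n) H xix k (i + 1 + t%:Z))%N.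
Proof.
rewrite big_ord_recl addr0; congr (_ + _)%N; apply: eq_bigr => t _.
by congr H; rewrite lift0; lia.
Qed.

Lemma percP_good_strip g n i S : fractal xiy k S ->
  (\sum_(t < n.+1) H xix k (i + t%:Z) = 0)%N ->
  P (no_crossing g S i (i + n.+1%:Z)) <= n.+1%:R * u_k k p.
Proof.
elim: n i S => [|n IH] i S fS; rewrite sum_H_recl => /eqP; rewrite addn_eq0.
  by move=> /andP[/eqP Hi _]; rewrite mul1r; apply: percP_block_good.
move=> /andP[/eqP Hi /eqP Hrest].
rewrite (_ : i + n.+2%:Z = i + 1 + n.+1%:Z); last by lia.
apply: le_trans
  (percP_peel (gB := true) (g' := g) _ _ fS _ (fun T fT _ => IH _ _ fT Hrest)) _.
- by lia.
- by rewrite orbT implybT.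
- by rewrite mulr_ge0 ?ler0n ?u_k_ge0.
by rewrite [n.+2%:R]mulrS mulrDl mul1r lerD2r percP_block_good.
Qed.

Let M := Num.max (u_k k p) (v_k k p).

Lemma percP_strip (g : bool) n i S : fractal xiy k S ->
  (\sum_(t < n.+1) H xix k (i + t%:Z) <= 1)%N -> (g -> 0 < n)%N ->
  P (no_crossing g S i (i + n.+1%:Z)) <= n.+1%:R * M.
Proof.
have uM : u_k k p <= M by rewrite le_max lexx.
have vM : v_k k p <= M by rewrite le_max lexx orbT.
elim: n g i S => [|n IH] g i S fS; rewrite sum_H_recl.
  rewrite big_ord0 addn0 mul1r => sumH; case: g => [/(_ isT) //|_].
  case Hi: (H xix k i) sumH => [|[|//]] _.
    exact: le_trans (percP_block_good _ fS Hi) uM.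
  exact: le_trans (percP_block_bad fS Hi) vM.
rewrite (_ : i + n.+2%:Z = i + 1 + n.+1%:Z); last by lia.
rewrite mulrS mulrDl mul1r.
case Hi: (H xix k i) => [|[|//]] sumH _.
  apply: le_trans
    (percP_peel (gB := true) (g' := false) (c := n.+1%:R * M) _ _ fS _ _) _.
  - by lia.
  - by rewrite orbT implybT.
  - by rewrite mulr_ge0 ?ler0n // (le_trans u_k_ge0 uM).
  - by move=> T fT _; apply: IH.
  by rewrite lerD2r (le_trans _ uM) // percP_block_good.
have {}sumH : (\sum_(t < n.+1) H xix k (i + 1 + t%:Z) = 0)%N by apply/eqP; rewrite -leqn0.
apply: le_trans
  (percP_peel (gB := false) (g' := true) (c := n.+1%:R * u_k k p) _ _ fS _ _) _.
- by lia.
- by rewrite implybT.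
- by rewrite mulr_ge0 ?ler0n ?u_k_ge0.
- by move=> T fT _; apply: percP_good_strip.
by rewrite lerD ?(le_trans (percP_block_bad fS Hi) vM) // ler_wpM2l ?ler0n.
Qed.

End BlockInduction.

Theorem lemma5p1 (R : realType) (k : nat) (p : R) (xix xiy : int -> nat) :
  0 <= p <= 1 ->
  (forall (i0 i1 j : int), i0 <= i1 -> H xiy k j = 0%N ->
     (\sum_(t < absz (i1 - i0 + 1)%R) H xix k (i0 + t%:Z)%R <= 1)%N ->
     forall S : set int, fractal xiy k S -> S `<=` Iblock k j ->
       percP p xix xiy (no_fractal xiy k S (i0 * Lk k) ((i1 + 1) * Lk k))
         <= (i1 - i0 + 1)%:~R * Num.max (u_k k p) (v_k k p)) /\
  (forall (i0 i1 : int), 1 <= i1 - i0 ->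
     (\sum_(t < absz (i1 - i0 + 1)%R) H xix k (i0 + t%:Z)%R <= 1)%N ->
     forall S : set int, fractal xiy k S ->
       percP p xix xiy (no_grouped_fractal xiy k S (i0 * Lk k) ((i1 + 1) * Lk k))
         <= (i1 - i0 + 1)%:~R * Num.max (u_k k p) (v_k k p)).
Proof.
(* Part (i) does not need the hypotheses on the block [j] containing [S]. *)
move=> p01; split => [i0 i1 j i01 _ | i0 i1 i01].
  have [n [-> ->]] : exists n : nat, i1 - i0 + 1 = n.+1%:Z /\ i1 + 1 = i0 + n.+1%:Z.
    by exists `|i1 - i0|%N; split; lia.
  move=> sumH S fS _; rewrite -no_crossingF.
  exact: percP_strip.
have [n [n_gt0 -> ->]] : exists n : nat,
    [/\ (0 < n)%N, i1 - i0 + 1 = n.+1%:Z & i1 + 1 = i0 + n.+1%:Z].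
  by exists `|i1 - i0|%N; split; lia.
move=> sumH S fS; rewrite -no_crossingT.
exact: percP_strip.
Qed.
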